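(* For integers $N\ge 3$ and $\Omega\in[-\pi,\pi)$ with $\Omega \notin \{0, 2\pi/N\}$, define $$Z(\Omega) = \frac{|\sin(N\Omega/2)|}{N}\left|\frac{1}{\sin(\Omega/2)} - \frac{1}{\sin(\Omega/2 - \pi/N)}\right| .$$ Let $\Omega$ be uniformly distributed on $[-\pi,\pi)\setminus[-0.5\pi/N,\,2.5\pi/N]$. Then there exist constants $C>0$ and $N_0$ (independent of $N$) such that $\mathbb E[Z(\Omega)^2] \le C/N$ for all $N \ge N_0$.
   Context: The quantity $Z(\Omega)$ is the magnitude of the output of a fixed two-tap correlator applied to the responses $[D_N(\Omega), D_N(\Omega-2\pi/N)]$ of an interferer at spatial frequency $\Omega$ in two adjacent DFT bins, where $D_N(\omega)=\frac1N\sum_{k=0}^{N-1}e^{j\omega k}$. *)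

From Stdlib Require Import Reals.
From Coquelicot Require Import Coquelicot.
Open Scope R_scope.

Definition Zfun (N : nat) (w : R) : R :=
  Rabs (sin (INR N * w / 2)) / INR N *
  Rabs (/ sin (w / 2) - / sin (w / 2 - PI / INR N)).

(* Support of the uniform law: [-pi, pi) \ [-0.5 pi/N, 2.5 pi/N]
   = [-pi, -pi/(2N)) u (5pi/(2N), pi), of total length 2 pi - 3 pi / N. *)
Definition support_length (N : nat) : R := 2 * PI - 3 * PI / INR N.

(* E[f(Omega)] for Omega uniform on the support above: integral of f over
   the support divided by its length (endpoints are Lebesgue-null). *)
Definition uniform_expect (N : nat) (f : R -> R) : R :=
  (RInt f (- PI) (- (PI / (2 * INR N))) + RInt f (5 * PI / (2 * INR N)) PI)
  / support_length N.

From Stdlib Require Import Reals Lra.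
From Coquelicot Require Import Coquelicot.
Open Scope R_scope.

(* Writing u = 1/sin(w/2) and v = 1/sin(w/2 - pi/N), we have
   Z^2 <= (u - v)^2 / N^2 <= 2 (u^2 + v^2) / N^2, and csc^2(w/2 - c) has the
   explicit primitive -2 cot(w/2 - c).  The support stays at distance of
   order pi/N from the poles w = 0 and w = 2 pi/N, so the primitives are O(N)
   at the endpoints: the integral of Z^2 is O(1/N), and the support has
   length at least 1. *)

Lemma sin_ge_quarter a : 0 <= a -> a <= 2 -> a / 4 <= sin a.
Proof.
intros ha0 ha2. pose proof PI2_1.
destruct (SIN a) as [Hlb _]; try lra.
replace (sin_lb a) with (a - a^3/6 + a^5/120 - a^7/5040) in Hlb
  by (unfold sin_lb, sin_approx, sin_term; simpl; field).
assert (Ha2 : a^2 <= 4) by nra.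
assert (0 <= a^5/120) by (apply Rmult_le_pos; [apply pow_le|]; lra).
assert (a^3 <= 4 * a) by (replace (a^3) with (a^2 * a) by ring; nra).
assert (a^7 <= 64 * a).
{ replace (a^7) with ((a^2)^3 * a) by ring.
  assert ((a^2)^3 <= 4^3) by (apply pow_incr; nra). nra. }
lra.
Qed.

Definition csc2_primitive (c w : R) : R := - 2 * cos (w/2 - c) / sin (w/2 - c).

Lemma is_RInt_csc2 c a b : a <= b ->
  (forall w, a <= w <= b -> sin (w/2 - c) <> 0) ->
  is_RInt (fun w => (/ sin (w/2 - c))^2) a b
    (csc2_primitive c b - csc2_primitive c a).
Proof.
intros hab hs.
apply (is_RInt_derive (csc2_primitive c));
  rewrite Rmin_left, Rmax_right by lra; intros x hx; unfold csc2_primitive.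
- auto_derive; [now apply hs|].
  pose proof (hs x hx) as hsx. pose proof (sin2_cos2 (x/2 - c)) as hp.
  unfold Rsqr in hp.
  replace (x * / 2 + - c) with (x/2 - c) by (unfold Rdiv; ring).
  set (s := sin (x/2 - c)) in *. set (co := cos (x/2 - c)) in *.
  replace ((/ s)^2) with ((s * s + co * co) / (s * s)) by (rewrite hp; field; auto).
  field; auto.
- apply (ex_derive_continuous (K := R_AbsRing) (V := R_NormedModule)).
  auto_derive. now apply hs.
Qed.

Lemma Zfun_sq N w : 0 < INR N -> Zfun N w ^ 2 =
  (sin (INR N * w / 2) / INR N * (/ sin (w/2) - / sin (w/2 - PI / INR N)))^2.
Proof.
intros hN. unfold Zfun. rewrite <- (pow2_abs (sin _ / _ * _)).
unfold Rdiv. rewrite !Rabs_mult, Rabs_inv, (Rabs_right (INR N)) by lra.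
reflexivity.
Qed.

Lemma Zfun_sq_le N w : 0 < INR N -> Zfun N w ^ 2 <=
  2 / INR N ^ 2 * ((/ sin (w/2))^2 + (/ sin (w/2 - PI / INR N))^2).
Proof.
intros hN. rewrite Zfun_sq by exact hN.
set (u := / sin (w/2)). set (v := / sin (w/2 - PI / INR N)).
set (s := sin (INR N * w / 2)).
assert (hs : s^2 <= 1) by (pose proof (SIN_bound (INR N * w / 2)) as hb; fold s in hb; nra).
assert (huv : (u - v)^2 <= 2 * (u^2 + v^2)) by (pose proof (pow2_ge_0 (u + v)); nra).
replace ((s / INR N * (u - v))^2) with (s^2 * (u - v)^2 * / INR N ^ 2) by (field; lra).
replace (2 / INR N ^ 2 * (u^2 + v^2)) with (2 * (u^2 + v^2) * / INR N ^ 2) by (field; lra).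
apply Rmult_le_compat_r.
- apply Rlt_le, Rinv_0_lt_compat, pow_lt, hN.
- pose proof (pow2_ge_0 (u - v)). nra.
Qed.

Lemma ex_RInt_Zfun_sq N a b : 0 < INR N -> a <= b ->
  (forall w, a <= w <= b -> sin (w/2) <> 0) ->
  (forall w, a <= w <= b -> sin (w/2 - PI / INR N) <> 0) ->
  ex_RInt (fun w => Zfun N w ^ 2) a b.
Proof.
intros hN hab h0 hc.
apply (ex_RInt_ext (fun w => (sin (INR N * w / 2) / INR N *
  (/ sin (w/2) - / sin (w/2 - PI / INR N)))^2)).
{ intros x _. now rewrite Zfun_sq. }
apply (ex_RInt_continuous (V := R_CompleteNormedModule)).
rewrite Rmin_left, Rmax_right by lra. intros x hx.
apply (ex_derive_continuous (K := R_AbsRing) (V := R_NormedModule)).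
auto_derive. repeat split.
- replace (x * / 2) with (x / 2) by reflexivity. exact (h0 x hx).
- replace (x * / 2 + - (PI / INR N)) with (x/2 - PI / INR N) by (unfold Rdiv; ring).
  exact (hc x hx).
Qed.

Lemma RInt_Zfun_sq_le N a b : 0 < INR N -> a <= b ->
  (forall w, a <= w <= b -> sin (w/2) <> 0) ->
  (forall w, a <= w <= b -> sin (w/2 - PI / INR N) <> 0) ->
  RInt (fun w => Zfun N w ^ 2) a b <= 2 / INR N ^ 2 *
    ((csc2_primitive 0 b - csc2_primitive 0 a) +
     (csc2_primitive (PI / INR N) b - csc2_primitive (PI / INR N) a)).
Proof.
intros hN hab h0 hc.
assert (H0 : is_RInt (fun w => (/ sin (w/2))^2) a b
               (csc2_primitive 0 b - csc2_primitive 0 a)).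
{ apply (is_RInt_ext (fun w => (/ sin (w/2 - 0))^2)).
  - intros x _. now rewrite Rminus_0_r.
  - apply is_RInt_csc2; [exact hab|]. intros w hw. rewrite Rminus_0_r. now apply h0. }
pose proof (is_RInt_scal _ _ _ (2 / INR N ^ 2) _
  (is_RInt_plus _ _ _ _ _ _ H0 (is_RInt_csc2 _ a b hab hc))) as Hbound.
apply (is_RInt_le _ _ a b _ _ hab (RInt_correct _ _ _ (ex_RInt_Zfun_sq N a b hN hab h0 hc)) Hbound).
intros x _. exact (Zfun_sq_le N x hN).
Qed.

Lemma csc2_primitive_diff_le c a b sa sb : 0 < sa -> 0 < sb ->
  sa <= Rabs (sin (a/2 - c)) -> sb <= Rabs (sin (b/2 - c)) ->
  csc2_primitive c b - csc2_primitive c a <= 2 / sa + 2 / sb.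
Proof.
assert (Habs : forall w s, 0 < s -> s <= Rabs (sin (w/2 - c)) ->
                 Rabs (csc2_primitive c w) <= 2 / s).
{ intros w s hs h. unfold csc2_primitive.
  assert (Hcos : Rabs (cos (w/2 - c)) <= 1)
    by (pose proof (COS_bound (w/2 - c)); apply Rabs_le; lra).
  unfold Rdiv. rewrite !Rabs_mult, Rabs_inv, (Rabs_left (-2)) by lra.
  apply Rle_trans with (2 * / Rabs (sin (w/2 - c))).
  - pose proof (Rabs_pos (cos (w/2 - c))).
    assert (0 < / Rabs (sin (w/2 - c))) by (apply Rinv_0_lt_compat; lra). nra.
  - apply Rmult_le_compat_l; [lra|]. apply Rinv_le_contravar; lra. }
intros hsa hsb ha hb.
pose proof (Habs a sa hsa ha). pose proof (Habs b sb hsb hb).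
pose proof (Rle_abs (csc2_primitive c b)).
pose proof (Rabs_maj2 (csc2_primitive c a)).
lra.
Qed.

Section Endpoints.

Variables n p : R.
Hypothesis n_ge3 : 3 <= n.
Hypothesis p_n : p * n = PI.

Let p_pos : 0 < p.
Proof. pose proof PI_RGT_0. nra. Qed.

Let p_le : 3 * p <= PI.
Proof. nra. Qed.

Let sin_p4 : p / 16 <= sin (p / 4).
Proof. pose proof PI_4. pose proof (sin_ge_quarter (p/4)). lra. Qed.

Let sin_5p4 : 5 * p / 16 <= sin (5 * p / 4).
Proof. pose proof PI_4. pose proof (sin_ge_quarter (5*p/4)). lra. Qed.

Let cos_p : 1 / 12 <= cos p.
Proof.
pose proof PI2_1. pose proof PI_4. rewrite <- sin_shift.
pose proof (sin_ge_quarter (PI/2 - p)). lra.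
Qed.

Let endpoint_constant : 2 / (p/16) + 2 / 1 + (2 / (5*p/16) + 2 / (1/12)) <= 28 * n.
Proof.
replace (2 / (p/16) + 2 / 1 + (2 / (5*p/16) + 2 / (1/12)))
  with (192 / 5 * / p + 26) by (field; lra).
assert (/ p <= n / 2).
{ apply (Rmult_le_reg_r p); [exact p_pos|].
  rewrite Rinv_l by lra. pose proof PI2_1. nra. }
lra.
Qed.

Lemma left_increments_le :
  (csc2_primitive 0 (-(p/2)) - csc2_primitive 0 (-PI)) +
  (csc2_primitive p (-(p/2)) - csc2_primitive p (-PI)) <= 28 * n.
Proof.
pose proof PI2_1.
apply Rle_trans with (2 / 1 + 2 / (p/16) + (2 / (1/12) + 2 / (5*p/16)));
  [| pose proof endpoint_constant; lra].
apply Rplus_le_compat; apply csc2_primitive_diff_le; try lra.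
- replace (-PI/2 - 0) with (-(PI/2)) by field.
  rewrite sin_neg, Rabs_Ropp, sin_PI2, Rabs_R1. lra.
- replace (-(p/2)/2 - 0) with (-(p/4)) by field.
  rewrite sin_neg, Rabs_Ropp, Rabs_right; lra.
- replace (-PI/2 - p) with (-(PI/2 - -p)) by field.
  rewrite sin_neg, Rabs_Ropp, sin_shift, cos_neg, Rabs_right; lra.
- replace (-(p/2)/2 - p) with (-(5*p/4)) by field.
  rewrite sin_neg, Rabs_Ropp, Rabs_right; lra.
Qed.

Lemma right_increments_le :
  (csc2_primitive 0 PI - csc2_primitive 0 (5*p/2)) +
  (csc2_primitive p PI - csc2_primitive p (5*p/2)) <= 28 * n.
Proof.
pose proof PI2_1.
apply Rle_trans with (2 / (5*p/16) + 2 / 1 + (2 / (p/16) + 2 / (1/12)));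
  [| pose proof endpoint_constant; lra].
apply Rplus_le_compat; apply csc2_primitive_diff_le; try lra.
- replace (5*p/2/2 - 0) with (5*p/4) by field. rewrite Rabs_right; lra.
- replace (PI/2 - 0) with (PI/2) by field. rewrite sin_PI2, Rabs_R1. lra.
- replace (5*p/2/2 - p) with (p/4) by field. rewrite Rabs_right; lra.
- rewrite sin_shift, Rabs_right; lra.
Qed.

End Endpoints.

Lemma RInt_Zfun_sq_support_le N : 3 <= INR N ->
  RInt (fun w => Zfun N w ^ 2) (- PI) (- (PI / (2 * INR N))) +
  RInt (fun w => Zfun N w ^ 2) (5 * PI / (2 * INR N)) PI <= 112 / INR N.
Proof.
intros hn. pose proof PI2_1.
set (p := PI / INR N).
assert (hp0 : 0 < p) by (apply Rdiv_lt_0_compat; lra).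
assert (hpn : p * INR N = PI) by (unfold p; field; lra).
assert (hp3 : 3 * p <= PI) by nra.
replace (PI / (2 * INR N)) with (p / 2) by (unfold p; field; lra).
replace (5 * PI / (2 * INR N)) with (5 * p / 2) by (unfold p; field; lra).
assert (hL := RInt_Zfun_sq_le N (-PI) (-(p/2)) ltac:(lra) ltac:(lra)).
assert (hR := RInt_Zfun_sq_le N (5*p/2) PI ltac:(lra) ltac:(lra)).
fold p in hL, hR.
pose proof (left_increments_le (INR N) p hn hpn).
pose proof (right_increments_le (INR N) p hn hpn).
assert (h2 : 0 < 2 / INR N ^ 2) by (apply Rdiv_lt_0_compat; nra).
replace (112 / INR N) with (2 / INR N ^ 2 * (56 * INR N)) by (field; lra).
assert (hL' : RInt (fun w => Zfun N w ^ 2) (-PI) (-(p/2)) <=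
               2 / INR N ^ 2 * (28 * INR N)).
{ eapply Rle_trans; [apply hL|]; intros; try (apply Rlt_not_eq, sin_lt_0_var; lra).
  apply Rmult_le_compat_l; lra. }
assert (hR' : RInt (fun w => Zfun N w ^ 2) (5*p/2) PI <=
               2 / INR N ^ 2 * (28 * INR N)).
{ eapply Rle_trans; [apply hR|]; intros; try (apply Rgt_not_eq, sin_gt_0; lra).
  apply Rmult_le_compat_l; lra. }
lra.
Qed.

Lemma Rdiv_le_of_ge_1 x K L : x <= K -> 0 <= K -> 1 <= L -> x / L <= K.
Proof.
intros hx hK hL. destruct (Rle_lt_dec 0 x) as [hx0 | hx0].
- assert (0 < / L <= 1)
    by (split; [apply Rinv_0_lt_compat | rewrite <- Rinv_1; apply Rinv_le_contravar]; lra).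
  unfold Rdiv. nra.
- assert (x / L < 0) by (apply Rdiv_neg_pos; lra). lra.
Qed.

Theorem mainTheorem7 :
  exists (C : R) (N0 : nat), 0 < C /\
    forall N : nat, (3 <= N)%nat -> (N0 <= N)%nat ->
      uniform_expect N (fun w => (Zfun N w) ^ 2) <= C / INR N.
Proof.
exists 112, 3%nat. split; [lra|]. intros N hN _.
assert (hn : 3 <= INR N) by (replace 3 with (INR 3) by (simpl; ring); now apply le_INR).
pose proof PI2_1.
apply Rdiv_le_of_ge_1.
- now apply RInt_Zfun_sq_support_le.
- apply Rlt_le, Rdiv_lt_0_compat; lra.
- unfold support_length.
  assert (3 * PI / INR N <= PI) by (apply Rle_div_l; nra).
  lra.
Qed.
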